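(* Let $b$ be a solution of length $L > 11$. Then $b$ is extendable and $b$ is not particular; that is, $b(b(0)) = 1$, $b(i) = 0$ for all $i$ with $b(0) < i < L$, and $b(b(0) - 1) = 0$.
   Context: A solution of length $L \ge 1$ is a sequence $(b(0), \dots, b(L-1))$ of integers with $0 \le b(i) < L$ such that for every $0 \le i < L$, $b(i) = |\{ j : 0 \le j < L,\ b(j) = i\}|$. A solution $b$ of length $L$ is extendable if $b(b(0)) = 1$ and $b(i) = 0$ for all $i$ with $b(0) < i < L$. It is particular if it is extendable and $b(b(0) - 1) > 0$. *)

From mathcomp Require Import all_boot.

(* A sequence b(0..L-1) is represented by b : nat -> nat; only values at
   indices < L matter. *)
Definition solution (L : nat) (b : nat -> nat) : Prop :=
  1 <= L /\
  forall i, i < L -> b i < L /\ b i = count (fun j => b j == i) (iota 0 L).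

Definition extendable (L : nat) (b : nat -> nat) : Prop :=
  solution L b /\ b (b 0) = 1 /\ (forall i, b 0 < i < L -> b i = 0).

Definition particular (L : nat) (b : nat -> nat) : Prop :=
  extendable L b /\ 0 < b (b 0 - 1).

From mathcomp Require Import all_boot zify.

(* Counting the entries of b in two ways gives sum_i b(i) = L and
   sum_i i b(i) = L, hence b(0) = sum_{i >= 2} (i - 1) b(i).  Since b(0) > 0 and
   b(b(0)) > 0, this sum leaves no room for a non-zero b(k) with k >= 3 and
   k <> b(0); so only the entries at 0, 1, 2, b(0) can be non-zero, and as b(0)
   counts the zero entries, b(0) >= L - 4 >= 8.  Then (b(0) - 1) b(b(0)) <= b(0)
   forces b(b(0)) = 1, and b(0) - 1 >= 7 is an index with a zero entry. *)

Lemma sum_pred1_nat (F : nat -> nat) m x : x < m ->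
  \sum_(0 <= i < m | x == i) F i = F x.
Proof.
move=> xm; rewrite big_mkcond (bigD1_seq x) ?mem_index_iota ?iota_uniq //=.
by rewrite eqxx big1 ?addn0 // => i; rewrite eq_sym => /negbTE ->.
Qed.

Lemma sum_comp_count (f F : nat -> nat) {n m} :
  (forall j, j < n -> f j < m) ->
  \sum_(0 <= j < n) F (f j) =
  \sum_(0 <= i < m) F i * count (fun j => f j == i) (iota 0 n).
Proof.
move=> fm.
under [RHS]eq_bigr => i _ do rewrite -sum1_count big_distrr /= muln1.
rewrite (exchange_big_dep xpredT) //= /index_iota subn0.
apply: eq_big_seq => j; rewrite mem_iota => /andP[_ /fm].
by move=> /(sum_pred1_nat F) <-.
Qed.

Lemma leq_sum_nat2 (F : nat -> nat) m n i j :
  m <= i < n -> m <= j < n -> i != j -> F i + F j <= \sum_(m <= k < n) F k.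
Proof.
move=> im jm ij; have r_uniq : uniq (index_iota m n) by exact: iota_uniq.
rewrite (bigD1_seq i) ?mem_index_iota //= -big_filter.
rewrite (bigD1_seq j) ?filter_uniq // ?mem_filter; last by rewrite eq_sym ij mem_index_iota.
by rewrite addnA leq_addr.
Qed.

Section Solution.

Context {L : nat} {b : nat -> nat}.
Hypothesis solb : solution L b.

Let L_gt0 : 0 < L := solb.1.

Lemma solution_lt i : i < L -> b i < L.
Proof. by move=> /solb.2 []. Qed.

Lemma solution_count i : i < L -> b i = count (fun j => b j == i) (iota 0 L).
Proof. by move=> /solb.2 []. Qed.

Lemma sum_solution_comp (F : nat -> nat) :
  \sum_(0 <= j < L) F (b j) = \sum_(0 <= i < L) F i * b i.
Proof.
rewrite (sum_comp_count b F solution_lt).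
by apply: eq_big_nat => i /andP[_ /solution_count <-].
Qed.

Lemma sum_solution : \sum_(0 <= i < L) b i = L.
Proof.
under eq_bigr do rewrite -[b _]mul1n.
by rewrite -(sum_solution_comp (fun=> 1)) sum_nat_const_nat subn0 muln1.
Qed.

Lemma sum_solution_weighted : \sum_(0 <= i < L) i * b i = L.
Proof. by rewrite -(sum_solution_comp id) sum_solution. Qed.

(* The term i = 0 vanishes because 0 - 1 truncates to 0. *)
Lemma solution_b0 : b 0 = \sum_(0 <= i < L) (i - 1) * b i.
Proof.
have := sum_solution_weighted; rewrite -{2}sum_solution !(big_ltn L_gt0) /= mul0n add0n.
under eq_big_nat => i /andP[i_gt0 _] do rewrite -[i in i * _](subnK i_gt0) mulnDl mul1n.
rewrite big_split /=; lia.
Qed.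

Lemma solution_value_gt0 j : j < L -> 0 < b (b j).
Proof.
move=> jL; rewrite solution_count ?solution_lt // -has_count.
by apply/hasP; exists j; rewrite ?mem_iota.
Qed.

Lemma solution_b0_gt0 : 0 < b 0.
Proof. by case: (posnP (b 0)) => // b00; have := solution_value_gt0 0 L_gt0; rewrite !b00. Qed.

Lemma solution_pair_bound k :
  k < L -> k != b 0 -> (k - 1) * b k + (b 0 - 1) * b (b 0) <= b 0.
Proof.
move=> kL k_b0; rewrite {3}solution_b0.
by apply: (leq_sum_nat2 (fun i => (i - 1) * b i)); rewrite ?kL ?solution_lt.
Qed.

Lemma solution_vanish k : 3 <= k < L -> k != b 0 -> b k = 0.
Proof.
move=> /andP[k_ge3 kL] k_b0; have := solution_pair_bound k kL k_b0.
have := leq_pmulr (b 0 - 1) (solution_value_gt0 0 L_gt0).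
have := solution_b0_gt0.
case: (b k) => [|x] //; rewrite mulnS; nia.
Qed.

Lemma solution_support j : j < L -> b j != 0 -> j \in [:: 0; 1; 2; b 0].
Proof.
move=> jL; apply: contraR; rewrite !inE => /norP[j0 /norP[j1 /norP[j2 jb0]]].
by rewrite solution_vanish //; lia.
Qed.

Lemma solution_b0_large : L <= b 0 + 4.
Proof.
have := count_predC (fun j => b j == 0) (iota 0 L).
rewrite size_iota -solution_count // => <-; rewrite leq_add2l -size_filter.
apply: (uniq_leq_size (s2 := [:: 0; 1; 2; b 0])); first by rewrite filter_uniq ?iota_uniq.
move=> j; rewrite mem_filter mem_iota add0n => /andP[bj jL]; exact: solution_support.
Qed.

Lemma solution_b_b0_eq1 : 3 <= b 0 -> b (b 0) = 1.
Proof.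
move=> b0_ge3; have := solution_pair_bound 0 L_gt0 (negbT (ltn_eqF solution_b0_gt0)).
have := solution_value_gt0 0 L_gt0.
case: (b (b 0)) => [|[|x]] // _; rewrite !mulnS; lia.
Qed.

End Solution.

Theorem mainTheorem7 (L : nat) (b : nat -> nat) :
  11 < L -> solution L b ->
  extendable L b /\ ~ particular L b.
Proof.
move=> L_gt11 solb; have b0L := solution_lt solb 0 solb.1.
have b0_ge8 : 8 <= b 0 by have := solution_b0_large solb; lia.
have ext : extendable L b.
  split=> //; split; first by apply: (solution_b_b0_eq1 solb); lia.
  by move=> i /andP[b0_i iL]; apply: (solution_vanish solb); lia.
by split=> // -[_]; rewrite (solution_vanish solb); lia.
Qed.
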